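(* Let $G=(V,E)$ be an unweighted graph, i.e. $w(u,v)=1$ if $(u,v)\in E$ and $w(u,v)=0$ otherwise. Then $G$ is a ground-truth input if and only if each connected component of $G$ is a clique.
   Context: $G$ is a ground-truth input if there exist an ultrametric $d$ on $V$ (a metric with $d(x,y)\le\max\{d(x,z),d(y,z)\}$ for all $x,y,z\in V$) and a non-increasing function $f:\mathbb{R}_+\to\mathbb{R}_+$ such that $w(x,y)=f(d(x,y))$ for all distinct $x,y\in V$. *)

From mathcomp Require Import all_boot all_order all_algebra.
From mathcomp Require Import reals.
Set Implicit Arguments. Unset Strict Implicit. Unset Printing Implicit Defensive.
Import Order.TTheory GRing.Theory Num.Theory.
Local Open Scope ring_scope.

Definition is_ultrametric (R : realType) (T : Type) (d : T -> T -> R) : Prop :=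
  [/\ (forall x y, 0 <= d x y),
      (forall x y, d x y = 0 <-> x = y),
      (forall x y, d x y = d y x),
      (forall x y z, d x y <= d x z + d z y) &
      (forall x y z, d x y <= Num.max (d x z) (d y z))].

(* f : R_+ -> R_+ non-increasing, encoded as a total function on R whose
   restriction to [0, +oo) maps into [0, +oo) and is non-increasing there. *)
Definition nonincr_nonneg (R : realType) (f : R -> R) : Prop :=
  (forall x, 0 <= x -> 0 <= f x) /\
  (forall x y, 0 <= x -> x <= y -> f y <= f x).

Definition ground_truth_input (R : realType) (T : eqType) (w : T -> T -> R) : Prop :=
  exists (d : T -> T -> R) (f : R -> R),
    [/\ is_ultrametric d, nonincr_nonneg f &
        forall x y, x != y -> w x y = f (d x y)].

Definition unweighted_weight (R : realType) (T : Type) (e : rel T) : T -> T -> R :=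
  fun u v => if e u v then 1 else 0.

From mathcomp Require Import all_boot all_order all_algebra.
From mathcomp Require Import reals.
Set Implicit Arguments. Unset Strict Implicit. Unset Printing Implicit Defensive.
Import Order.TTheory GRing.Theory Num.Theory.
Local Open Scope ring_scope.

(* (=>) For distinct x, y, z the ultrametric inequality and the monotonicity
   of f give w x z >= min (w x y) (w y z); for 0/1 weights this makes
   adjacency transitive, so every component is a clique.
   (<=) Take d = 0 on the diagonal, 1 inside a component and 2 across
   components, and f the indicator of [t <= 1]. *)

Lemma connect_min (T : finType) (e r : rel T) :
  reflexive r -> transitive r -> subrel e r -> subrel (connect e) r.
Proof.
move=> r_refl r_trans e_r x _ /connectP[p e_p ->].
elim: p x e_p => //= y p IHp x /andP[/e_r r_xy /IHp]; exact: r_trans.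
Qed.

Lemma connect_edge_of_edge_trans (T : finType) (e : rel T) :
  (forall x y z, x != z -> e x y -> e y z -> e x z) ->
  forall x y, connect e x y -> x != y -> e x y.
Proof.
move=> e_trans x y c_xy; pose r := [rel a b | (a == b) || e a b].
have r_refl : reflexive r by move=> a; rewrite /= eqxx.
have r_trans : transitive r.
  move=> b a c /orP[/eqP-> // | e_ab] /orP[/eqP<- | e_bc]; rewrite /= ?e_ab ?orbT //.
  by case: eqVneq => //= ac; apply: e_trans e_ab e_bc.
have e_r : subrel e r by move=> a b e_ab; rewrite /= e_ab orbT.
have /orP[/eqP-> | //] := connect_min r_refl r_trans e_r c_xy.
by rewrite eqxx.
Qed.

Lemma ground_truth_ge_min (R : realType) (T : eqType) (w : T -> T -> R) :
  ground_truth_input w ->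
  forall x y z, x != z -> x != y -> y != z -> Num.min (w x y) (w y z) <= w x z.
Proof.
move=> [d [f [[d_ge0 _ dC _ d_ultra] [_ f_nonincr] wE]]] x y z xz xy yz.
rewrite !wE // ge_min; have := d_ultra x z y; rewrite (dC z y) le_max.
by case/orP=> d_xz; apply/orP; [left | right]; apply: f_nonincr.
Qed.

Lemma ground_truth_edge_trans (R : realType) (T : eqType) (e : rel T) :
  irreflexive e -> ground_truth_input (unweighted_weight R e) ->
  forall x y z, x != z -> e x y -> e y z -> e x z.
Proof.
move=> e_irr gt x y z xz e_xy e_yz.
have xy : x != y by apply: contraTneq e_xy => ->; rewrite e_irr.
have yz : y != z by apply: contraTneq e_yz => ->; rewrite e_irr.
have := ground_truth_ge_min gt xz xy yz.
by rewrite /unweighted_weight e_xy e_yz minxx; case: (e x z); rewrite ?ler10.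
Qed.

Definition block_dist (R : realType) (T : eqType) (r : rel T) (x y : T) : R :=
  if x == y then 0 else if r x y then 1 else 2.

Lemma block_dist_ultrametric (R : realType) (T : eqType) (r : rel T) :
  symmetric r -> transitive r -> is_ultrametric (block_dist R r).
Proof.
move=> r_sym r_trans.
have d_ge0 x y : 0 <= block_dist R r x y.
  by rewrite /block_dist; case: eqP; case: (r x y); rewrite ?ler01 ?ler0n.
have dC x y : block_dist R r x y = block_dist R r y x.
  by rewrite /block_dist eq_sym r_sym.
have d_ultra x y z :
    block_dist R r x y <= Num.max (block_dist R r x z) (block_dist R r y z).
  rewrite le_max; case: (eqVneq x y) => [<- | xy].
    by rewrite {1}/block_dist eqxx d_ge0.
  rewrite /block_dist (negbTE xy).
  case: (eqVneq x z) => [<- | xz].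
    by rewrite eq_sym (negbTE xy) r_sym lexx orbT.
  case: (eqVneq y z) => [<- | yz]; first by rewrite lexx.
  case r_xy: (r x y); first by case: (r x z); rewrite ?lexx ?ler1n.
  case r_xz: (r x z); case r_yz: (r y z); rewrite ?lexx ?orbT //.
  by move: r_xy; rewrite (r_trans z x y r_xz) // r_sym.
split=> [x y | x y | x y | x y z | x y z].
- exact: d_ge0.
- rewrite /block_dist; split=> [|->]; last by rewrite eqxx.
  by case: eqP => // _; case: (r x y) => /eqP; rewrite ?oner_eq0 ?pnatr_eq0.
- exact: dC.
- apply: le_trans (d_ultra x y z) _.
  by rewrite ge_max (dC y z) lerDl lerDr !d_ge0.
- exact: d_ultra.
Qed.

Definition le1_indicator (R : realType) (t : R) : R := ((t <= 1)%R)%:R.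

Lemma le1_indicator_nonincr_nonneg (R : realType) : nonincr_nonneg (@le1_indicator R).
Proof.
split=> [x _ | x y _ xy]; first exact: ler0n.
rewrite /le1_indicator; case: (boolP (y <= 1)) => [y_le1 | _]; last exact: ler0n.
by rewrite (le_trans xy y_le1).
Qed.

Theorem proposition1 (R : realType) (T : finType) (e : rel T)
  (e_sym : symmetric e) (e_irr : irreflexive e) :
  ground_truth_input (unweighted_weight R e) <->
  (forall x y : T, connect e x y -> x != y -> e x y).
Proof.
split=> [gt | cliques].
  by apply: connect_edge_of_edge_trans; apply: ground_truth_edge_trans gt.
exists (block_dist R (connect e)), (@le1_indicator R); split.
- exact: block_dist_ultrametric (sym_connect_sym e_sym) (@connect_trans _ e).
- exact: le1_indicator_nonincr_nonneg.
move=> x y xy; rewrite /unweighted_weight /le1_indicator /block_dist (negbTE xy).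
case c_xy: (connect e x y); first by rewrite cliques // lexx.
by rewrite (contraFF (@connect1 _ e x y) c_xy) lern1.
Qed.
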